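(* There is an absolute constant $C$ such that for all $R_1,R_2\ge1$ and all finitely supported non-negative measures $\mu,\nu$ on $[-1,1]^2$, $$\Big|\sum_{z,w}e^{i(R_1z_1w_1+R_2z_2w_2)}\mu(z)\nu(w)\Big|\le C(R_1R_2)^{\frac12}\Big(\sum_z\mu(z)\Big)^{\frac12}\Big(\sum_w\nu(w)\Big)^{\frac12}M_\mu^{\frac12}M_\nu^{\frac12},$$ where $M_\mu=\max_{\xi_1,\xi_2\in\mathbb{R}}\mu\big(B(\xi_1,\tfrac1{R_1})\times B(\xi_2,\tfrac1{R_2})\big)$ and similarly for $M_\nu$.
   Context: Here $z=(z_1,z_2)$, $w=(w_1,w_2)$ range over the supports of $\mu$ and $\nu$, $\mu(z)$ denotes the mass of $\mu$ at $z$, and $B(\xi,\rho)=[\xi-\rho,\xi+\rho]\subset\mathbb{R}$. *)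

From Stdlib Require Import Reals List ClassicalEpsilon.
From Coquelicot Require Import Coquelicot.
Open Scope R_scope.

(* A finitely supported non-negative measure on R^2, given as a finite list of
   atoms (point, mass).  mu(A) = sum of the masses of atoms lying in A.
   Repeated points are allowed; their masses add up. *)
Definition fmeasure := list ((R * R) * R).

Definition pt (a : (R * R) * R) : R * R := fst a.
Definition mass (a : (R * R) * R) : R := snd a.

Definition valid_measure (mu : fmeasure) : Prop :=
  forall a, In a mu ->
    0 <= mass a /\ -1 <= fst (pt a) <= 1 /\ -1 <= snd (pt a) <= 1.

Definition total_mass (mu : fmeasure) : R :=
  fold_right (fun a s => mass a + s) 0 mu.

Definition ind (P : Prop) : R :=
  match excluded_middle_informative P with left _ => 1 | right _ => 0 end.

Definition measure_of (mu : fmeasure) (A : R * R -> Prop) : R :=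
  fold_right (fun a s => ind (A (pt a)) * mass a + s) 0 mu.

Definition Bint (xi rho x : R) : Prop := xi - rho <= x <= xi + rho.

Definition box_mass (mu : fmeasure) (R1 R2 xi1 xi2 : R) : R :=
  measure_of mu (fun z => Bint xi1 (/ R1) (fst z) /\ Bint xi2 (/ R2) (snd z)).

Definition is_M (mu : fmeasure) (R1 R2 M : R) : Prop :=
  (forall xi1 xi2, box_mass mu R1 R2 xi1 xi2 <= M) /\
  (exists xi1 xi2, box_mass mu R1 R2 xi1 xi2 = M).

Definition cexpi (t : R) : C := (cos t, sin t).

Definition osc_sum (R1 R2 : R) (mu nu : fmeasure) : C :=
  fold_right (fun a s =>
    Cplus (fold_right (fun b t =>
      Cplus (Cmult (cexpi (R1 * fst (pt a) * fst (pt b) + R2 * snd (pt a) * snd (pt b)))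
                   (RtoC (mass a * mass b))) t) (RtoC 0) nu) s) (RtoC 0) mu.

From Pilot Require Import Defs.
From Stdlib Require Import Reals List Lra Lia ZArith ClassicalEpsilon.
From Coquelicot Require Import Coquelicot.
Open Scope R_scope.

(* Fix an odd n = 2m+1 and round each frequency (R1 w1, R2 w2) to the nearest point k of the
   lattice (1/n) Z^2; this changes the sum by at most |mu| |nu| / n.  Dividing the phase
   e^{i z.k/n} by the window kernels K(z_j) = sum_{|j| <= m} e^{i z_j j/n}, which are >= 7n/8
   on [-1,1], spreads every frequency k uniformly over the window k + [-m,m]^2, so the sum
   becomes sum_w nu(w) sum_{j in window} g(k_w + j) with g(p) = sum_z x_z e^{i z.p/n} and
   |x_z| <= 2 mu(z)/n^2.  Cauchy-Schwarz in w, together with the fact that all frequencies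
   whose window contains a given lattice point come from one box of size 1/R1 x 1/R2, bounds
   its square by |nu| M_nu n^2 times the l2 norm of g on a lattice box of side ~ n R.  That
   l2 norm is estimated by TT*: averaging over shifts produces a Fejer-type kernel in z - z',
   bounded by n R and decaying like (R |z - z'|)^-2, and a Schur test against the boxes of mu
   gives O(n^2 R1 R2 M_mu |mu|).  Everything is uniform in n, and n -> oo removes the
   rounding error. *)

Definition sumR {A} (l : list A) (f : A -> R) : R := fold_right (fun a s => f a + s) 0 l.
Definition sumC {A} (l : list A) (f : A -> C) : C :=
  fold_right (fun a s => Cplus (f a) s) (RtoC 0) l.

Lemma sumR_ext {A : Type} l (f g : A -> R) : (forall a, In a l -> f a = g a) -> sumR l f = sumR l g.
Proof. induction l; simpl; intros H; auto. rewrite H, IHl; auto. Qed.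

Lemma sumC_ext {A : Type} l (f g : A -> C) : (forall a, In a l -> f a = g a) -> sumC l f = sumC l g.
Proof. induction l; simpl; intros H; auto. rewrite H, IHl; auto. Qed.

Lemma sumR_le {A : Type} l (f g : A -> R) :
  (forall a, In a l -> f a <= g a) -> sumR l f <= sumR l g.
Proof.
  induction l; simpl; intros H; [lra|].
  assert (sumR l f <= sumR l g) by auto. specialize (H a (or_introl eq_refl)). lra.
Qed.

Lemma sumR_ge0 {A : Type} l (f : A -> R) : (forall a, In a l -> 0 <= f a) -> 0 <= sumR l f.
Proof.
  induction l; simpl; intros H; [lra|].
  assert (0 <= f a) by auto. assert (0 <= sumR l f) by auto. lra.
Qed.

Lemma sumR_singleton {A : Type} (x : A) f : sumR (x :: nil) f = f x.
Proof. simpl. ring. Qed.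

Lemma sumR_plus {A : Type} l (f g : A -> R) : sumR l (fun a => f a + g a) = sumR l f + sumR l g.
Proof. induction l; simpl; lra. Qed.

Lemma sumR_scal {A : Type} l c (f : A -> R) : sumR l (fun a => c * f a) = c * sumR l f.
Proof. induction l; simpl; [ring|]. rewrite IHl; ring. Qed.

Lemma sumR_scal_r {A : Type} l c (f : A -> R) : sumR l (fun a => f a * c) = sumR l f * c.
Proof. induction l; simpl; [ring|]. rewrite IHl; ring. Qed.

Lemma sumR_const {A : Type} l c : sumR l (fun _ : A => c) = INR (length l) * c.
Proof. induction l; simpl length; rewrite ?S_INR; simpl; [ring|]. rewrite IHl; ring. Qed.

Lemma sumR_app {A : Type} l1 l2 (f : A -> R) : sumR (l1 ++ l2) f = sumR l1 f + sumR l2 f.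
Proof. induction l1; simpl; [ring|]. rewrite IHl1; ring. Qed.

Lemma sumR_map {A B : Type} (g : B -> A) l (f : A -> R) :
  sumR (map g l) f = sumR l (fun b => f (g b)).
Proof. induction l; simpl; auto. rewrite IHl; auto. Qed.

Lemma le_sumR_In {A : Type} l (f : A -> R) a :
  (forall x, In x l -> 0 <= f x) -> In a l -> f a <= sumR l f.
Proof.
  induction l as [|b l IH]; simpl; intros H Hi; [contradiction|].
  destruct Hi as [<-|Hi].
  - assert (0 <= sumR l f) by (apply sumR_ge0; auto). lra.
  - assert (f a <= sumR l f) by auto. specialize (H b (or_introl eq_refl)). lra.
Qed.

Lemma sumR_swap {A B : Type} (l1 : list A) (l2 : list B) (f : A -> B -> R) :
  sumR l1 (fun a => sumR l2 (fun b => f a b)) = sumR l2 (fun b => sumR l1 (fun a => f a b)).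
Proof.
  induction l1; simpl; [induction l2; simpl in *; lra|].
  rewrite IHl1, sumR_plus. auto.
Qed.

Lemma sumR_mult {A B : Type} (l1 : list A) (l2 : list B) f g :
  sumR l1 f * sumR l2 g = sumR l1 (fun a => sumR l2 (fun b => f a * g b)).
Proof. rewrite <- sumR_scal_r. apply sumR_ext; intros. rewrite <- sumR_scal. auto. Qed.

Lemma sumR_prod {A B : Type} (l1 : list A) (l2 : list B) f :
  sumR (list_prod l1 l2) f = sumR l1 (fun a => sumR l2 (fun b => f (a, b))).
Proof. induction l1; simpl; auto. rewrite sumR_app, sumR_map, IHl1. auto. Qed.

Lemma sumC_plus {A : Type} l (f g : A -> C) :
  sumC l (fun a => Cplus (f a) (g a)) = Cplus (sumC l f) (sumC l g).
Proof.
  induction l; simpl; [apply injective_projections; simpl; lra|].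
  rewrite IHl. ring.
Qed.

Lemma sumC_minus {A : Type} l (f g : A -> C) :
  sumC l (fun a => Cminus (f a) (g a)) = Cminus (sumC l f) (sumC l g).
Proof.
  induction l; simpl; [apply injective_projections; simpl; lra|].
  rewrite IHl. ring.
Qed.

Lemma sumC_scal {A : Type} l c (f : A -> C) : sumC l (fun a => Cmult c (f a)) = Cmult c (sumC l f).
Proof. induction l; simpl; [apply injective_projections; simpl; lra|]. rewrite IHl; ring. Qed.

Lemma sumC_scal_r {A : Type} l c (f : A -> C) :
  sumC l (fun a => Cmult (f a) c) = Cmult (sumC l f) c.
Proof. induction l; simpl; [apply injective_projections; simpl; lra|]. rewrite IHl; ring. Qed.

Lemma sumC_swap {A B : Type} (l1 : list A) (l2 : list B) (f : A -> B -> C) :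
  sumC l1 (fun a => sumC l2 (fun b => f a b)) = sumC l2 (fun b => sumC l1 (fun a => f a b)).
Proof.
  induction l1; simpl.
  - induction l2; simpl; auto. rewrite <- IHl2. apply injective_projections; simpl; lra.
  - rewrite IHl1, sumC_plus. auto.
Qed.

Lemma sumC_mult {A B : Type} (l1 : list A) (l2 : list B) f g :
  Cmult (sumC l1 f) (sumC l2 g) = sumC l1 (fun a => sumC l2 (fun b => Cmult (f a) (g b))).
Proof. rewrite <- sumC_scal_r. apply sumC_ext; intros. rewrite <- sumC_scal. auto. Qed.

Lemma sumC_conj {A : Type} l (f : A -> C) : Cconj (sumC l f) = sumC l (fun a => Cconj (f a)).
Proof.
  induction l; simpl; [apply injective_projections; simpl; lra|].
  rewrite Cplus_conj, IHl; auto.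
Qed.

Lemma RtoC_sumR {A : Type} l (f : A -> R) : RtoC (sumR l f) = sumC l (fun a => RtoC (f a)).
Proof. induction l; simpl; auto. rewrite <- IHl, RtoC_plus; auto. Qed.

Lemma Re_sumC {A : Type} l (f : A -> C) : Re (sumC l f) = sumR l (fun a => Re (f a)).
Proof. induction l; simpl; auto. rewrite <- IHl. auto. Qed.

Lemma Cmod_sumC {A : Type} l (f : A -> C) : Cmod (sumC l f) <= sumR l (fun a => Cmod (f a)).
Proof.
  induction l; simpl; [rewrite Cmod_0; lra|].
  eapply Rle_trans; [apply Cmod_triangle|lra].
Qed.

Lemma sumC_map {A B : Type} (g : B -> A) l (f : A -> C) :
  sumC (map g l) f = sumC l (fun b => f (g b)).
Proof. induction l; simpl; auto. rewrite IHl; auto. Qed.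

Lemma sumC_app {A : Type} l1 l2 (f : A -> C) : sumC (l1 ++ l2) f = Cplus (sumC l1 f) (sumC l2 f).
Proof. induction l1; simpl; [apply injective_projections; simpl; lra|]. rewrite IHl1; ring. Qed.

Lemma sumC_prod {A B : Type} (l1 : list A) (l2 : list B) f :
  sumC (list_prod l1 l2) f = sumC l1 (fun a => sumC l2 (fun b => f (a, b))).
Proof. induction l1; simpl; auto. rewrite sumC_app, sumC_map, IHl1. auto. Qed.

Lemma sumC_mult4 {A B C D} (l1 : list A) (l2 : list B) (l3 : list C) (l4 : list D) f1 f2 f3 f4 :
  sumC l1 (fun a => sumC l2 (fun b => sumC l3 (fun c => sumC l4 (fun d =>
    Cmult (Cmult (Cmult (f1 a) (f2 b)) (f3 c)) (f4 d))))) =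
  Cmult (Cmult (Cmult (sumC l1 f1) (sumC l2 f2)) (sumC l3 f3)) (sumC l4 f4).
Proof.
  transitivity (sumC l1 (fun a => sumC l2 (fun b => sumC l3 (fun c =>
    Cmult (Cmult (Cmult (f1 a) (f2 b)) (f3 c)) (sumC l4 f4))))).
  { apply sumC_ext; intros. apply sumC_ext; intros. apply sumC_ext; intros. apply sumC_scal. }
  transitivity (sumC l1 (fun a => sumC l2 (fun b =>
    Cmult (Cmult (Cmult (f1 a) (f2 b)) (sumC l3 f3)) (sumC l4 f4)))).
  { apply sumC_ext; intros. apply sumC_ext; intros. rewrite sumC_scal_r, sumC_scal. auto. }
  transitivity (sumC l1 (fun a =>
    Cmult (Cmult (Cmult (f1 a) (sumC l2 f2)) (sumC l3 f3)) (sumC l4 f4))).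
  { apply sumC_ext; intros. rewrite sumC_scal_r, sumC_scal_r, sumC_scal. auto. }
  rewrite sumC_scal_r, sumC_scal_r, sumC_scal_r. auto.
Qed.

Lemma cauchy_schwarz {A} (l : list A) (w f : A -> R) : (forall x, In x l -> 0 <= w x) ->
  (sumR l (fun x => w x * f x)) ^ 2 <= sumR l w * sumR l (fun x => w x * f x ^ 2).
Proof.
  intros Hw. set (S0 := sumR l w). set (S1 := sumR l (fun x => w x * f x)).
  set (S2 := sumR l (fun x => w x * f x ^ 2)).
  assert (H0 : 0 <= S0) by (apply sumR_ge0; auto).
  assert (Hq : forall t, 0 <= S2 - 2 * t * S1 + t ^ 2 * S0).
  { intros t.
    replace (S2 - 2 * t * S1 + t ^ 2 * S0) with (sumR l (fun x => w x * (f x - t) ^ 2)).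
    - apply sumR_ge0; intros y Hy. apply Rmult_le_pos; [auto|apply pow2_ge_0].
    - transitivity (sumR l (fun x => w x * f x ^ 2 + ((-2 * t) * (w x * f x) + t ^ 2 * w x))).
      + apply sumR_ext; intros; ring.
      + rewrite !sumR_plus, !sumR_scal. unfold S0, S1, S2; ring. }
  destruct (Req_dec S0 0) as [Z0|Z0].
  - assert (S1 = 0).
    { destruct (Req_dec S1 0); auto. exfalso.
      specialize (Hq ((S2 + 1) / (2 * S1))). rewrite Z0 in Hq.
      replace (S2 - 2 * ((S2 + 1) / (2 * S1)) * S1 + ((S2 + 1) / (2 * S1)) ^ 2 * 0)
        with (-1) in Hq by (field; auto). lra. }
    rewrite H, Z0. lra.
  - specialize (Hq (S1 / S0)).
    replace (S2 - 2 * (S1 / S0) * S1 + (S1 / S0) ^ 2 * S0) with ((S0 * S2 - S1 ^ 2) / S0) in Hq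
      by (field; auto).
    assert (0 <= S0 * S2 - S1 ^ 2).
    { apply Rmult_le_reg_r with (/ S0); [apply Rinv_0_lt_compat; lra|]. lra. }
    lra.
Qed.

(* TT*: expand the square and bound each correlation by its modulus. *)
Lemma sum_Cmod_sqr_le_correlations {A L} (l : list L) (mu : list A) (x : A -> C) (F : A -> L -> C) :
  sumR l (fun i => Cmod (sumC mu (fun a => Cmult (x a) (F a i))) ^ 2) <=
  sumR mu (fun a => sumR mu (fun a' => Cmod (x a) * Cmod (x a') *
     Cmod (sumC l (fun i => Cmult (F a i) (Cconj (F a' i)))))).
Proof.
  set (X := sumR l _).
  assert (HX : 0 <= X) by (apply sumR_ge0; intros; apply pow2_ge_0).
  assert (E : RtoC X = sumC mu (fun a => sumC mu (fun a' =>
       Cmult (Cmult (x a) (Cconj (x a'))) (sumC l (fun i => Cmult (F a i) (Cconj (F a' i))))))).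
  { unfold X. rewrite RtoC_sumR.
    rewrite (sumC_ext l _ (fun i => sumC mu (fun a => sumC mu (fun a' =>
        Cmult (Cmult (x a) (Cconj (x a'))) (Cmult (F a i) (Cconj (F a' i))))))).
    2:{ intros i _. rewrite Cmod2_conj, sumC_conj, sumC_mult. apply sumC_ext; intros a _.
        apply sumC_ext; intros a' _. rewrite Cmult_conj. ring. }
    rewrite sumC_swap. apply sumC_ext; intros a _. rewrite sumC_swap. apply sumC_ext; intros a' _.
    rewrite sumC_scal. auto. }
  replace X with (Cmod (RtoC X)) by (rewrite Cmod_R; apply Rabs_right; lra).
  rewrite E. eapply Rle_trans; [apply Cmod_sumC|]. apply sumR_le; intros a _.
  eapply Rle_trans; [apply Cmod_sumC|]. apply sumR_le; intros a' _.
  rewrite !Cmod_mult, Cmod_conj. lra.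
Qed.

Lemma Rabs_sin_le x : Rabs (sin x) <= Rabs x.
Proof.
  assert (Hpos : forall y, 0 <= y -> Rabs (sin y) <= y).
  { intros y Hy. apply Rabs_le. pose proof (SIN_bound y).
    destruct (Req_dec y 0) as [->|Hy0]; [rewrite sin_0; lra|].
    pose proof (sin_lt_x y ltac:(lra)). split; [|lra].
    destruct (Rle_lt_dec 1 y); [lra|].
    pose proof (sin_ge_0 y Hy ltac:(pose proof PI2_3_2; lra)). lra. }
  destruct (Rle_lt_dec 0 x).
  - rewrite (Rabs_right x) by lra. auto.
  - rewrite <- Rabs_Ropp, <- sin_neg, (Rabs_left x) by lra. apply Hpos. lra.
Qed.

Lemma sin_ge_linear u : 0 <= u <= 1 -> 5/6 * u <= sin u.
Proof.
  intros H. destruct (pre_sin_bound u 0) as [H1 _]; try lra.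
  replace (sin_approx u (2 * 0 + 1)) with (u - u ^ 3 / 6) in H1
    by (unfold sin_approx, sin_term; simpl; unfold INR; simpl; field).
  nra.
Qed.

Lemma sin_sqr_ge v : Rabs v <= 1 -> 25/36 * v ^ 2 <= sin v ^ 2.
Proof.
  intros H. apply Rabs_le_between in H. destruct (Rle_lt_dec 0 v).
  - pose proof (sin_ge_linear v ltac:(lra)). nra.
  - pose proof (sin_ge_linear (- v) ltac:(lra)). rewrite sin_neg in H0. nra.
Qed.

Lemma cos_ge_7_8 x : Rabs x <= 1/2 -> 7/8 <= cos x.
Proof.
  intros H. replace x with (2 * (x / 2)) by field. rewrite cos_2a_sin.
  pose proof (Rabs_sin_le (x / 2)). pose proof (Rabs_pos (sin (x / 2))).
  assert (Rabs (x / 2) <= 1/4).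
  { unfold Rdiv. rewrite Rabs_mult, (Rabs_right (/ 2)) by lra. lra. }
  pose proof (Rsqr_abs (sin (x / 2))). unfold Rsqr in *. nra.
Qed.

Lemma cexpi_add a b : Cmult (cexpi a) (cexpi b) = cexpi (a + b).
Proof.
  unfold cexpi, Cmult. simpl. rewrite cos_plus, sin_plus.
  apply injective_projections; simpl; ring.
Qed.

Lemma cexpi_conj a : Cconj (cexpi a) = cexpi (- a).
Proof. unfold cexpi, Cconj. simpl. rewrite cos_neg, sin_neg. auto. Qed.

Lemma Cmod_cexpi a : Cmod (cexpi a) = 1.
Proof.
  unfold Cmod, cexpi. simpl. transitivity (sqrt 1); [|apply sqrt_1]. f_equal.
  pose proof (sin2_cos2 a). unfold Rsqr in H. ring_simplify. lra.
Qed.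

Lemma cexpi_0 : cexpi 0 = RtoC 1.
Proof. unfold cexpi. rewrite cos_0, sin_0. auto. Qed.

Lemma Cmod_cexpi_sub_sqr a b : Cmod (Cminus (cexpi a) (cexpi b)) ^ 2 = 4 * sin ((a - b) / 2) ^ 2.
Proof.
  unfold Cmod. rewrite pow2_sqrt by (apply Rplus_le_le_0_compat; apply pow2_ge_0).
  unfold cexpi, Cminus, Cplus, Copp. simpl.
  assert (C2 := cos_2a_sin ((a - b) / 2)).
  replace (2 * ((a - b) / 2)) with (a - b) in C2 by field.
  rewrite cos_minus in C2. pose proof (sin2_cos2 a). pose proof (sin2_cos2 b).
  unfold Rsqr in *. nra.
Qed.

Lemma cexpi_lipschitz a b : Cmod (Cminus (cexpi a) (cexpi b)) <= Rabs (a - b).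
Proof.
  apply Rsqr_incr_0_var; [|apply Rabs_pos]. rewrite <- Rsqr_abs. unfold Rsqr.
  assert (H := Cmod_cexpi_sub_sqr a b).
  pose proof (Rabs_sin_le ((a - b) / 2)).
  assert (sin ((a - b) / 2) ^ 2 <= ((a - b) / 2) ^ 2).
  { rewrite <- (pow2_abs (sin _)), <- (pow2_abs ((a - b) / 2)).
    apply pow_incr; split; [apply Rabs_pos|lra]. }
  simpl in *. nra.
Qed.

Definition zrange (a : Z) (n : nat) : list Z := map (fun i => (a + Z.of_nat i)%Z) (seq 0 n).

Lemma zrange_S a n : zrange a (S n) = a :: zrange (a + 1) n.
Proof.
  unfold zrange. simpl. rewrite <- seq_shift, map_map. f_equal; [lia|].
  apply map_ext; intros; lia.
Qed.

Lemma zrange_app n1 : forall a n2, zrange a (n1 + n2) = zrange a n1 ++ zrange (a + Z.of_nat n1) n2.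
Proof.
  induction n1; intros a n2; [simpl; rewrite Z.add_0_r; auto|].
  change (S n1 + n2)%nat with (S (n1 + n2)). rewrite !zrange_S, IHn1. simpl.
  do 3 f_equal. lia.
Qed.

Lemma zrange_1 a : zrange a 1 = a :: nil.
Proof. unfold zrange. simpl. f_equal. lia. Qed.

Lemma in_zrange a n k : In k (zrange a n) <-> (a <= k < a + Z.of_nat n)%Z.
Proof.
  unfold zrange. rewrite in_map_iff. split.
  - intros [x [<- Hx]]. apply in_seq in Hx. lia.
  - intros H. exists (Z.to_nat (k - a)). split; [lia|]. apply in_seq. lia.
Qed.

Lemma zrange_length a n : length (zrange a n) = n.
Proof. unfold zrange. rewrite length_map, length_seq. auto. Qed.

Lemma sumR_zrange_shift k a n (f : Z -> R) :
  sumR (zrange a n) (fun j => f (k + j)%Z) = sumR (zrange (k + a) n) f.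
Proof.
  replace (zrange (k + a) n) with (map (fun j => (k + j)%Z) (zrange a n)).
  - rewrite sumR_map. auto.
  - unfold zrange. rewrite map_map. apply map_ext; intros; lia.
Qed.

Lemma sumR_zrange_le a n b N (f : Z -> R) : (forall x, 0 <= f x) -> (b <= a)%Z ->
  (a + Z.of_nat n <= b + Z.of_nat N)%Z -> sumR (zrange a n) f <= sumR (zrange b N) f.
Proof.
  intros Hf H1 H2. set (d := Z.to_nat (a - b)). set (r := (N - d - n)%nat).
  replace N with (d + (n + r))%nat by lia. rewrite !zrange_app, !sumR_app.
  replace (b + Z.of_nat d)%Z with a by lia.
  assert (0 <= sumR (zrange b d) f) by (apply sumR_ge0; auto).
  assert (0 <= sumR (zrange (a + Z.of_nat n) r) f) by (apply sumR_ge0; auto). lra.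
Qed.

Definition centered (K : nat) : list Z := zrange (- Z.of_nat K) (2 * K + 1).

Lemma in_centered K k : In k (centered K) <-> (- Z.of_nat K <= k <= Z.of_nat K)%Z.
Proof. unfold centered. rewrite in_zrange. lia. Qed.

Lemma length_centered K : INR (length (centered K)) = 2 * INR K + 1.
Proof. unfold centered. rewrite zrange_length, plus_INR, mult_INR. simpl. ring. Qed.

Definition dirichlet (th : R) (a : Z) (n : nat) : C :=
  sumC (zrange a n) (fun s => cexpi (th * IZR s)).

Lemma dirichlet_telescope th n : forall a,
  Cmult (Cminus (cexpi th) (RtoC 1)) (dirichlet th a n) =
  Cminus (cexpi (th * IZR (a + Z.of_nat n))) (cexpi (th * IZR a)).
Proof.
  unfold dirichlet. induction n; intros a.
  - simpl. rewrite Z.add_0_r. apply injective_projections; simpl; ring.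
  - replace (a + Z.of_nat (S n))%Z with (a + 1 + Z.of_nat n)%Z by lia.
    rewrite zrange_S. simpl. rewrite Cmult_plus_distr_l, IHn.
    assert (E : Cmult (cexpi th) (cexpi (th * IZR a)) = cexpi (th * IZR (a + 1))).
    { rewrite cexpi_add, plus_IZR. f_equal. ring. }
    rewrite <- E. unfold Cminus. ring.
Qed.

Lemma dirichlet_sin_bound th a n : sin (th / 2) ^ 2 * Cmod (dirichlet th a n) ^ 2 <= 1.
Proof.
  set (D := dirichlet th a n).
  assert (H2 : Cmod (Cmult (Cminus (cexpi th) (cexpi 0)) D) <= 2).
  { rewrite cexpi_0. unfold D. rewrite dirichlet_telescope. unfold Cminus.
    eapply Rle_trans; [apply Cmod_triangle|]. rewrite Cmod_opp, !Cmod_cexpi. lra. }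
  rewrite Cmod_mult in H2.
  assert (H3 := Cmod_cexpi_sub_sqr th 0). rewrite Rminus_0_r in H3.
  pose proof (Cmod_ge_0 D). pose proof (Cmod_ge_0 (Cminus (cexpi th) (cexpi 0))).
  set (u := Cmod (Cminus _ _)) in *. set (v := Cmod D) in *.
  assert (u * v * (u * v) <= 4) by (apply Rle_trans with (2 * 2); [apply Rmult_le_compat; nra|lra]).
  set (s := sin (th / 2)) in *.
  replace (s ^ 2 * v ^ 2) with (u ^ 2 * v ^ 2 / 4) by (rewrite H3; field).
  replace (u ^ 2 * v ^ 2) with (u * v * (u * v)) by ring. lra.
Qed.

Lemma ind_true (P : Prop) : P -> Defs.ind P = 1.
Proof. intros H. unfold Defs.ind. destruct (excluded_middle_informative P); tauto. Qed.

Lemma ind_bounds (P : Prop) : 0 <= Defs.ind P <= 1.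
Proof. unfold Defs.ind. destruct (excluded_middle_informative P); lra. Qed.

Lemma ind_and (P Q : Prop) : Defs.ind (P /\ Q) = Defs.ind P * Defs.ind Q.
Proof.
  unfold Defs.ind. destruct (excluded_middle_informative P), (excluded_middle_informative Q),
    (excluded_middle_informative (P /\ Q)); try tauto; lra.
Qed.

Lemma ind_mono (P Q : Prop) : (P -> Q) -> Defs.ind P <= Defs.ind Q.
Proof.
  unfold Defs.ind. destruct (excluded_middle_informative P), (excluded_middle_informative Q);
    try tauto; lra.
Qed.

Lemma measure_of_sumR mu A : measure_of mu A = sumR mu (fun a => Defs.ind (A (pt a)) * mass a).
Proof. reflexivity. Qed.

Definition round (y : R) : Z := up (y - / 2).

Lemma round_spec y : Rabs (y - IZR (round y)) <= 1/2.
Proof. unfold round. destruct (archimed (y - / 2)) as [H1 H2]. apply Rabs_le. lra. Qed.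

Definition decay (a : Z) : R := 2 / (IZR a ^ 2 + 1).

Lemma decay_pos a : 0 < decay a.
Proof.
  unfold decay. pose proof (pow2_ge_0 (IZR a)).
  apply Rmult_lt_0_compat; [lra|]. apply Rinv_0_lt_compat. lra.
Qed.

(* Telescoping against 2/(a+1): the sum over [-A, A] of 1/(a^2+1) is at most 5 - 4/(A+1). *)
Lemma sum_decay_le (A : nat) : sumR (centered A) decay <= 10.
Proof.
  assert (H : sumR (zrange (- Z.of_nat A) (2 * A + 1)) (fun a => / (IZR a ^ 2 + 1))
              <= 5 - 4 / (INR A + 1)).
  { induction A.
    - simpl. lra.
    - replace (2 * S A + 1)%nat with (1 + ((2 * A + 1) + 1))%nat by lia.
      rewrite (zrange_app 1), (zrange_app (2 * A + 1)), !sumR_app, !zrange_1, !sumR_singleton.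
      replace (- Z.of_nat (S A))%Z with (- (Z.of_nat A + 1))%Z by lia.
      replace (- (Z.of_nat A + 1) + Z.of_nat 1)%Z with (- Z.of_nat A)%Z by lia.
      replace (- Z.of_nat A + Z.of_nat (2 * A + 1))%Z with (Z.of_nat A + 1)%Z by lia.
      rewrite opp_IZR, plus_IZR, <- INR_IZR_INZ, S_INR.
      replace ((- (INR A + 1)) ^ 2) with ((INR A + 1) ^ 2) by ring.
      pose proof (pos_INR A).
      assert (/ ((INR A + 1) ^ 2 + 1) <= 2 / (INR A + 1) - 2 / (INR A + 1 + 1)).
      { apply Rmult_le_reg_r with (((INR A + 1) ^ 2 + 1) * (INR A + 1) * (INR A + 1 + 1)).
        - apply Rmult_lt_0_compat; [apply Rmult_lt_0_compat|]; nra.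
        - field_simplify; nra. }
      unfold Rdiv in *. lra. }
  unfold centered, decay, Rdiv. rewrite sumR_scal. pose proof (pos_INR A).
  assert (0 <= / (INR A + 1)) by (apply Rlt_le, Rinv_0_lt_compat; lra).
  unfold Rdiv in H. lra.
Qed.

Lemma sumR_centered_shift_le (m K : nat) (k : Z) (F : Z -> R) : (forall p, 0 <= F p) ->
  (- Z.of_nat K <= k - Z.of_nat m)%Z -> (k + Z.of_nat m <= Z.of_nat K)%Z ->
  sumR (centered m) (fun j => F (k + j)%Z) <=
  sumR (centered K) (fun p => Defs.ind (k - Z.of_nat m <= p <= k + Z.of_nat m)%Z * F p).
Proof.
  intros HF Hlo Hhi. unfold centered. rewrite sumR_zrange_shift.
  rewrite (sumR_ext _ F (fun p => Defs.ind (k - Z.of_nat m <= p <= k + Z.of_nat m)%Z * F p)).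
  - apply sumR_zrange_le; [|lia|lia]. intros p.
    pose proof (ind_bounds (k - Z.of_nat m <= p <= k + Z.of_nat m)%Z). specialize (HF p). nra.
  - intros p Hp. apply in_zrange in Hp. rewrite ind_true by lia. ring.
Qed.

Lemma in_box_round (R x x' : R) : 0 < R ->
  Bint (x + 2 * IZR (round (R * (x' - x) / 2)) / R) (/ R) x'.
Proof.
  intros HR. set (a := round (R * (x' - x) / 2)).
  pose proof (round_spec (R * (x' - x) / 2)) as Ha. fold a in Ha. apply Rabs_le_between in Ha.
  unfold Bint.
  replace (x + 2 * IZR a / R - / R) with (x + (2 * IZR a - 1) / R) by (field; lra).
  replace (x + 2 * IZR a / R + / R) with (x + (2 * IZR a + 1) / R) by (field; lra).
  replace x' with (x + R * (x' - x) / R) by (field; lra).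
  assert (0 <= / R) by (apply Rlt_le, Rinv_0_lt_compat; lra).
  split; apply Rplus_le_compat_l; unfold Rdiv; apply Rmult_le_compat_r; lra.
Qed.

Lemma round_in_centered_up (R d : R) : 1 <= R -> Rabs d <= 2 ->
  In (round (R * d / 2)) (centered (Z.to_nat (up R))).
Proof.
  intros HR Hd. apply Rabs_le_between in Hd. apply in_centered.
  destruct (archimed R) as [U1 U2].
  assert (0 <= up R)%Z by (apply le_IZR; simpl; lra).
  pose proof (round_spec (R * d / 2)) as Ha. apply Rabs_le_between in Ha.
  assert (IZR (round (R * d / 2)) < IZR (up R + 1)) by (rewrite plus_IZR; nra).
  assert (IZR (- up R - 1) < IZR (round (R * d / 2))) by (rewrite minus_IZR, opp_IZR; nra).
  apply lt_IZR in H0. apply lt_IZR in H1. lia.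
Qed.

(* f <= 2B / (1 + a^2) for the index a = round (R (x' - x) / 2) of the box containing x'. *)
Lemma le_decay_box_cover (R B f x x' : R) : 1 <= R -> 0 <= f -> f <= B ->
  f * (R * (x - x')) ^ 2 <= B -> Rabs (x - x') <= 2 ->
  f <= B * sumR (centered (Z.to_nat (up R)))
             (fun a => Defs.ind (Bint (x + 2 * IZR a / R) (/ R) x') * decay a).
Proof.
  intros HR Hf HfB HfB2 Hd.
  set (a := round (R * (x' - x) / 2)).
  assert (Hin : In a (centered (Z.to_nat (up R))))
    by (apply round_in_centered_up; [lra|rewrite Rabs_minus_sym; lra]).
  assert (Hf_decay : f * (IZR a ^ 2 + 1) <= 2 * B).
  { destruct (Z.eq_dec a 0) as [->|Ha0]; [simpl; lra|].
    pose proof (round_spec (R * (x' - x) / 2)) as Ha. fold a in Ha. apply Rabs_le_between in Ha.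
    assert (Hs : 1 <= IZR a \/ IZR a <= -1).
    { destruct (Z_le_gt_dec 1 a); [left; apply IZR_le; lia|right; apply IZR_le; lia]. }
    assert (IZR a ^ 2 <= (R * (x - x')) ^ 2).
    { replace ((R * (x - x')) ^ 2) with ((R * (x' - x)) ^ 2) by ring. destruct Hs; nra. }
    assert (f * IZR a ^ 2 <= f * (R * (x - x')) ^ 2) by (apply Rmult_le_compat_l; lra).
    lra. }
  eapply Rle_trans.
  2:{ apply Rmult_le_compat_l; [lra|]. apply (le_sumR_In _ _ a); [|exact Hin].
      intros b _. apply Rmult_le_pos; [apply ind_bounds|apply Rlt_le, decay_pos]. }
  cbv beta. rewrite ind_true by (apply in_box_round; lra). unfold decay.
  assert (Hp : 0 < IZR a ^ 2 + 1) by (pose proof (pow2_ge_0 (IZR a)); lra).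
  apply Rmult_le_reg_r with (IZR a ^ 2 + 1); [exact Hp|].
  replace (B * (1 * (2 / (IZR a ^ 2 + 1))) * (IZR a ^ 2 + 1)) with (2 * B) by (field; lra).
  lra.
Qed.

(** * Discretization of the frequencies *)

Definition win_len (m : nat) : R := 2 * INR m + 1.

Definition phase (m : nat) (x : R) (k : Z) : C := cexpi (x / win_len m * IZR k).

Definition phase2 (m : nat) (z : R * R) (p : Z * Z) : C :=
  Cmult (phase m (fst z) (fst p)) (phase m (snd z) (snd p)).

Definition win_kernel (m : nat) (x : R) : C := sumC (centered m) (fun j => phase m x j).

Definition window_sumC (m : nat) (F : Z * Z -> C) (k : Z * Z) : C :=
  sumC (centered m) (fun j1 => sumC (centered m) (fun j2 => F (fst k + j1, snd k + j2)%Z)).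

Definition window_sumR (m : nat) (F : Z * Z -> R) (k : Z * Z) : R :=
  sumR (centered m) (fun j1 => sumR (centered m) (fun j2 => F (fst k + j1, snd k + j2)%Z)).

Lemma win_len_ge1 m : 1 <= win_len m.
Proof. unfold win_len. pose proof (pos_INR m). lra. Qed.

Lemma phase_add m x k j : Cmult (phase m x k) (phase m x j) = phase m x (k + j).
Proof. unfold phase. rewrite cexpi_add, plus_IZR. f_equal. ring. Qed.

Lemma Rabs_phase_arg_le m x j : Rabs x <= 1 -> In j (centered m) ->
  Rabs (x / win_len m * IZR j) <= 1/2.
Proof.
  intros Hx Hj. apply in_centered in Hj. pose proof (win_len_ge1 m).
  assert (Hjm : Rabs (IZR j) <= INR m).
  { rewrite INR_IZR_INZ. apply Rabs_le. rewrite <- opp_IZR. split; apply IZR_le; lia. }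
  unfold Rdiv. rewrite !Rabs_mult, Rabs_inv, (Rabs_right (win_len m)) by lra.
  apply Rle_trans with (1 * / win_len m * INR m).
  - apply Rmult_le_compat; try apply Rmult_le_pos; try apply Rabs_pos; auto.
    + apply Rlt_le, Rinv_0_lt_compat; lra.
    + apply Rmult_le_compat_r; [apply Rlt_le, Rinv_0_lt_compat; lra|auto].
  - unfold win_len in *. apply Rmult_le_reg_r with (2 * INR m + 1); [lra|].
    field_simplify; lra.
Qed.

(* For |x| <= 1 every phase in the window stays within angle 1/2, so the window kernel
   is a sum of 2m+1 terms with real part at least 7/8. *)
Lemma win_kernel_lower m x : Rabs x <= 1 -> 7/8 * win_len m <= Cmod (win_kernel m x).
Proof.
  intros Hx. eapply Rle_trans; [|apply re_le_Cmod]. eapply Rle_trans; [|apply Rle_abs].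
  unfold win_kernel. rewrite Re_sumC.
  eapply Rle_trans;
    [|apply sumR_le; intros j Hj; apply cos_ge_7_8, (Rabs_phase_arg_le m x j Hx Hj)].
  rewrite sumR_const, length_centered. unfold win_len. lra.
Qed.

Lemma win_kernel_neq0 m x : Rabs x <= 1 -> win_kernel m x <> RtoC 0.
Proof.
  intros H E. pose proof (win_kernel_lower m x H). rewrite E, Cmod_0 in H0.
  pose proof (win_len_ge1 m). lra.
Qed.

Lemma phase_mul_win_kernel m x k :
  Cmult (phase m x k) (win_kernel m x) = sumC (centered m) (fun j => phase m x (k + j)).
Proof. unfold win_kernel. rewrite <- sumC_scal. apply sumC_ext; intros. apply phase_add. Qed.

Lemma phase2_spread m z k :
  Cmult (phase2 m z k) (Cmult (win_kernel m (fst z)) (win_kernel m (snd z))) =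
  window_sumC m (phase2 m z) k.
Proof.
  unfold phase2, window_sumC.
  transitivity (Cmult (Cmult (phase m (fst z) (fst k)) (win_kernel m (fst z)))
                      (Cmult (phase m (snd z) (snd k)) (win_kernel m (snd z)))); [ring|].
  rewrite !phase_mul_win_kernel, sumC_mult. auto.
Qed.

Lemma Cmod_window_sumC_le m F k :
  Cmod (window_sumC m F k) <= window_sumR m (fun p => Cmod (F p)) k.
Proof.
  eapply Rle_trans; [apply Cmod_sumC|]. apply sumR_le; intros j1 _. apply Cmod_sumC.
Qed.

Lemma cauchy_schwarz_centered m (G : Z -> R) :
  (sumR (centered m) G) ^ 2 <= win_len m * sumR (centered m) (fun j => G j ^ 2).
Proof.
  pose proof (cauchy_schwarz (centered m) (fun _ => 1) G ltac:(intros; lra)) as H.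
  rewrite (sumR_ext _ (fun x => 1 * G x) G) in H by (intros; ring).
  rewrite (sumR_ext _ (fun x => 1 * G x ^ 2) (fun j => G j ^ 2)) in H by (intros; ring).
  rewrite sumR_const, length_centered in H. unfold win_len. lra.
Qed.

Lemma window_sumR_sqr_le m F k :
  window_sumR m F k ^ 2 <= win_len m ^ 2 * window_sumR m (fun p => F p ^ 2) k.
Proof.
  unfold window_sumR. eapply Rle_trans; [apply cauchy_schwarz_centered|].
  pose proof (win_len_ge1 m). replace (win_len m ^ 2) with (win_len m * win_len m) by ring.
  rewrite Rmult_assoc. apply Rmult_le_compat_l; [lra|].
  rewrite <- sumR_scal. apply sumR_le; intros j1 _. apply cauchy_schwarz_centered.
Qed.

Definition lattice_pt (m : nat) (R1 R2 : R) (w : R * R) : Z * Z :=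
  (round (win_len m * R1 * fst w), round (win_len m * R2 * snd w)).

Definition weight (m : nat) (a : (R * R) * R) : C :=
  Cdiv (RtoC (mass a)) (Cmult (win_kernel m (fst (pt a))) (win_kernel m (snd (pt a)))).

Definition lattice_coef (m : nat) (mu : fmeasure) (p : Z * Z) : C :=
  sumC mu (fun a => Cmult (weight m a) (phase2 m (pt a) p)).

Definition discrete_osc_sum (m : nat) (R1 R2 : R) (mu nu : fmeasure) : C :=
  sumC mu (fun a => sumC nu (fun b =>
    Cmult (phase2 m (pt a) (lattice_pt m R1 R2 (pt b))) (RtoC (mass a * mass b)))).

Lemma phase2_approx m R1 R2 (z w : R * R) : Rabs (fst z) <= 1 -> Rabs (snd z) <= 1 ->
  Cmod (Cminus (cexpi (R1 * fst z * fst w + R2 * snd z * snd w))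
               (phase2 m z (lattice_pt m R1 R2 w))) <= / win_len m.
Proof.
  intros Hz1 Hz2. unfold phase2, phase, lattice_pt. simpl. rewrite cexpi_add.
  eapply Rle_trans; [apply cexpi_lipschitz|].
  pose proof (win_len_ge1 m). set (n := win_len m) in *.
  set (e1 := n * R1 * fst w - IZR (round (n * R1 * fst w))).
  set (e2 := n * R2 * snd w - IZR (round (n * R2 * snd w))).
  assert (He1 : Rabs e1 <= 1/2) by apply round_spec.
  assert (He2 : Rabs e2 <= 1/2) by apply round_spec.
  replace (_ - _) with (fst z * e1 / n + snd z * e2 / n) by (unfold e1, e2; field; lra).
  eapply Rle_trans; [apply Rabs_triang|].
  unfold Rdiv. rewrite !Rabs_mult, !(Rabs_right (/ n))
    by (apply Rle_ge, Rlt_le, Rinv_0_lt_compat; lra).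
  assert (0 < / n) by (apply Rinv_0_lt_compat; lra).
  pose proof (Rabs_pos (fst z)). pose proof (Rabs_pos (snd z)).
  pose proof (Rabs_pos e1). pose proof (Rabs_pos e2).
  assert (Rabs (fst z) * Rabs e1 <= 1/2)
    by (apply Rle_trans with (1 * (1/2)); [apply Rmult_le_compat|]; lra).
  assert (Rabs (snd z) * Rabs e2 <= 1/2)
    by (apply Rle_trans with (1 * (1/2)); [apply Rmult_le_compat|]; lra).
  nra.
Qed.

Lemma valid_measure_In mu a : valid_measure mu -> In a mu ->
  0 <= mass a /\ Rabs (fst (pt a)) <= 1 /\ Rabs (snd (pt a)) <= 1.
Proof. intros V H. destruct (V a H) as [H1 [H2 H3]]. split; auto. split; apply Rabs_le; lra. Qed.

Lemma total_mass_sumR mu : total_mass mu = sumR mu mass.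
Proof. reflexivity. Qed.

Lemma total_mass_ge0 mu : valid_measure mu -> 0 <= total_mass mu.
Proof. intros V. apply sumR_ge0; intros a Ha. apply (valid_measure_In mu a V Ha). Qed.

Lemma discretization_error m R1 R2 mu nu : valid_measure mu -> valid_measure nu ->
  Cmod (Cminus (osc_sum R1 R2 mu nu) (discrete_osc_sum m R1 R2 mu nu))
    <= total_mass mu * total_mass nu / win_len m.
Proof.
  intros Vm Vn.
  change (osc_sum R1 R2 mu nu) with (sumC mu (fun a => sumC nu (fun b =>
    Cmult (cexpi (R1 * fst (pt a) * fst (pt b) + R2 * snd (pt a) * snd (pt b)))
          (RtoC (mass a * mass b))))).
  unfold discrete_osc_sum. rewrite !total_mass_sumR, <- sumC_minus.
  eapply Rle_trans; [apply Cmod_sumC|].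
  unfold Rdiv. rewrite sumR_mult, Rmult_comm, <- sumR_scal. apply sumR_le; intros a Ha.
  rewrite <- sumC_minus. eapply Rle_trans; [apply Cmod_sumC|].
  rewrite <- sumR_scal. apply sumR_le; intros b Hb.
  destruct (valid_measure_In mu a Vm Ha) as [Ma [Za1 Za2]].
  destruct (valid_measure_In nu b Vn Hb) as [Mb _].
  replace (Cminus _ _) with (Cmult (Cminus
      (cexpi (R1 * fst (pt a) * fst (pt b) + R2 * snd (pt a) * snd (pt b)))
      (phase2 m (pt a) (lattice_pt m R1 R2 (pt b)))) (RtoC (mass a * mass b))) by ring.
  rewrite Cmod_mult, Cmod_R, Rabs_right by (apply Rle_ge, Rmult_le_pos; auto).
  pose proof (phase2_approx m R1 R2 (pt a) (pt b) Za1 Za2).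
  assert (0 <= mass a * mass b) by (apply Rmult_le_pos; auto).
  apply Rmult_le_compat_r; auto.
Qed.

(* Multiplying and dividing by the window kernels spreads each lattice frequency k over the
   window k + [-m, m]^2; the measure mu then only enters through [lattice_coef]. *)
Lemma discrete_osc_sum_spread m R1 R2 mu nu : valid_measure mu ->
  discrete_osc_sum m R1 R2 mu nu =
  sumC nu (fun b => Cmult (RtoC (mass b))
                          (window_sumC m (lattice_coef m mu) (lattice_pt m R1 R2 (pt b)))).
Proof.
  intros Vm. unfold discrete_osc_sum. rewrite sumC_swap. apply sumC_ext; intros b _.
  set (k := lattice_pt m R1 R2 (pt b)).
  transitivity (Cmult (RtoC (mass b)) (sumC mu (fun a =>
    Cmult (weight m a) (window_sumC m (phase2 m (pt a)) k)))).
  - rewrite <- sumC_scal. apply sumC_ext; intros a Ha. rewrite <- phase2_spread. unfold weight.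
    destruct (valid_measure_In mu a Vm Ha) as [_ [H1 H2]].
    pose proof (win_kernel_neq0 m _ H1). pose proof (win_kernel_neq0 m _ H2).
    rewrite RtoC_mult. field. split; auto.
  - f_equal. unfold window_sumC, lattice_coef.
    rewrite (sumC_ext mu _ (fun a => sumC (centered m) (fun j1 => sumC (centered m) (fun j2 =>
      Cmult (weight m a) (phase2 m (pt a) (fst k + j1, snd k + j2)%Z))))).
    + rewrite sumC_swap. apply sumC_ext; intros j1 _. rewrite sumC_swap. auto.
    + intros a _. rewrite <- sumC_scal. apply sumC_ext; intros. rewrite <- sumC_scal. auto.
Qed.

Lemma discrete_osc_sum_sqr_le m R1 R2 mu nu : valid_measure mu -> valid_measure nu ->
  Cmod (discrete_osc_sum m R1 R2 mu nu) ^ 2 <= total_mass nu * win_len m ^ 2 *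
    sumR nu (fun b => mass b *
      window_sumR m (fun p => Cmod (lattice_coef m mu p) ^ 2) (lattice_pt m R1 R2 (pt b))).
Proof.
  intros Vm Vn. rewrite discrete_osc_sum_spread by auto.
  set (G := fun b =>
    window_sumR m (fun p => Cmod (lattice_coef m mu p)) (lattice_pt m R1 R2 (pt b))).
  assert (HG : 0 <= sumR nu (fun b => mass b * G b)).
  { apply sumR_ge0; intros b Hb. destruct (valid_measure_In nu b Vn Hb) as [Mb _].
    apply Rmult_le_pos; auto. apply sumR_ge0; intros; apply sumR_ge0; intros; apply Cmod_ge_0. }
  eapply Rle_trans.
  { apply pow_incr. split; [apply Cmod_ge_0|].
    eapply Rle_trans; [apply Cmod_sumC|]. apply sumR_le; intros b Hb.
    destruct (valid_measure_In nu b Vn Hb) as [Mb _].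
    rewrite Cmod_mult, Cmod_R, Rabs_right by lra.
    apply Rmult_le_compat_l; [auto|apply Cmod_window_sumC_le]. }
  fold G.
  eapply Rle_trans; [apply cauchy_schwarz; intros b Hb; apply (valid_measure_In nu b Vn Hb)|].
  rewrite <- total_mass_sumR, Rmult_assoc. apply Rmult_le_compat_l; [apply total_mass_ge0; auto|].
  rewrite <- sumR_scal. apply sumR_le; intros b Hb.
  destruct (valid_measure_In nu b Vn Hb) as [Mb _].
  rewrite (Rmult_comm (win_len m ^ 2)), Rmult_assoc. apply Rmult_le_compat_l; auto.
  rewrite Rmult_comm. apply window_sumR_sqr_le.
Qed.

(** * Counting lattice points in boxes *)

Definition lattice_radius (m : nat) (R : R) : nat := Z.to_nat (up (win_len m * (R + 1))).

Definition box_sumR (K1 K2 : nat) (F : Z * Z -> R) : R :=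
  sumR (centered K1) (fun p1 => sumR (centered K2) (fun p2 => F (p1, p2))).

Definition in_window (m : nat) (k p : Z * Z) : Prop :=
  (fst k - Z.of_nat m <= fst p <= fst k + Z.of_nat m)%Z /\
  (snd k - Z.of_nat m <= snd p <= snd k + Z.of_nat m)%Z.

Lemma box_mass_sumR mu R1 R2 x1 x2 : box_mass mu R1 R2 x1 x2 =
  sumR mu (fun a => Defs.ind (Bint x1 (/ R1) (fst (pt a))) *
                    Defs.ind (Bint x2 (/ R2) (snd (pt a))) * mass a).
Proof. unfold box_mass. rewrite measure_of_sumR. apply sumR_ext; intros. rewrite ind_and. auto. Qed.

Lemma box_mass_ge0 mu R1 R2 x1 x2 : valid_measure mu -> 0 <= box_mass mu R1 R2 x1 x2.
Proof.
  intros V. rewrite box_mass_sumR. apply sumR_ge0; intros a Ha.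
  pose proof (ind_bounds (Bint x1 (/ R1) (fst (pt a)))).
  pose proof (ind_bounds (Bint x2 (/ R2) (snd (pt a)))).
  pose proof (valid_measure_In mu a V Ha). apply Rmult_le_pos; [nra|tauto].
Qed.

Lemma lattice_radius_spec m R : 1 <= R ->
  win_len m * (R + 1) < INR (lattice_radius m R) <= win_len m * (R + 1) + 1.
Proof.
  intros HR. pose proof (win_len_ge1 m). destruct (archimed (win_len m * (R + 1))) as [H1 H2].
  assert (0 <= up (win_len m * (R + 1)))%Z by (apply le_IZR; simpl; nra).
  unfold lattice_radius. rewrite INR_IZR_INZ, Z2Nat.id by lia. lra.
Qed.

Lemma round_window_in_radius m R w : 1 <= R -> Rabs w <= 1 ->
  (- Z.of_nat (lattice_radius m R) <= round (win_len m * R * w) - Z.of_nat m)%Z /\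
  (round (win_len m * R * w) + Z.of_nat m <= Z.of_nat (lattice_radius m R))%Z.
Proof.
  intros HR Hw. pose proof (lattice_radius_spec m R HR) as HK. pose proof (win_len_ge1 m).
  pose proof (round_spec (win_len m * R * w)) as Hk. apply Rabs_le_between in Hk, Hw.
  assert (0 <= win_len m * R) by nra.
  assert (- (win_len m * R) <= win_len m * R * w <= win_len m * R) by (split; nra).
  assert (Hm : INR m = (win_len m - 1) / 2) by (unfold win_len; field).
  rewrite INR_IZR_INZ in HK, Hm.
  split; apply le_IZR; rewrite ?minus_IZR, ?plus_IZR, ?opp_IZR; nra.
Qed.

Lemma round_window_in_box m R w p : 1 <= R ->
  (round (win_len m * R * w) - Z.of_nat m <= p <= round (win_len m * R * w) + Z.of_nat m)%Z ->
  Bint (IZR p / (win_len m * R)) (/ R) w.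
Proof.
  intros HR Hp. pose proof (win_len_ge1 m).
  pose proof (round_spec (win_len m * R * w)). set (k := round (win_len m * R * w)) in *.
  assert (Hk : Rabs (IZR k - IZR p) <= INR m).
  { rewrite INR_IZR_INZ. apply Rabs_le. rewrite <- minus_IZR, <- opp_IZR.
    split; apply IZR_le; lia. }
  assert (Rabs (win_len m * R * w - IZR p) <= win_len m / 2).
  { replace (win_len m * R * w - IZR p)
      with ((win_len m * R * w - IZR k) + (IZR k - IZR p)) by ring.
    eapply Rle_trans; [apply Rabs_triang|]. unfold win_len in *. lra. }
  assert (Rabs (w - IZR p / (win_len m * R)) <= / R).
  { replace (w - IZR p / (win_len m * R))
      with ((win_len m * R * w - IZR p) / (win_len m * R)) by (field; lra).
    unfold Rdiv. rewrite Rabs_mult, Rabs_inv, (Rabs_right (win_len m * R)) by nra.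
    apply Rle_trans with (win_len m / 2 * / (win_len m * R)).
    - apply Rmult_le_compat_r; [apply Rlt_le, Rinv_0_lt_compat; nra|auto].
    - replace (win_len m / 2 * / (win_len m * R)) with (/ R * / 2) by (field; lra).
      assert (0 < / R) by (apply Rinv_0_lt_compat; lra). lra. }
  apply Rabs_le_between in H2. unfold Bint. lra.
Qed.

Lemma window_sumR_le_box_sumR m K1 K2 F k : (forall p, 0 <= F p) ->
  (- Z.of_nat K1 <= fst k - Z.of_nat m)%Z -> (fst k + Z.of_nat m <= Z.of_nat K1)%Z ->
  (- Z.of_nat K2 <= snd k - Z.of_nat m)%Z -> (snd k + Z.of_nat m <= Z.of_nat K2)%Z ->
  window_sumR m F k <= box_sumR K1 K2 (fun p => Defs.ind (in_window m k p) * F p).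
Proof.
  intros HF H1 H2 H3 H4. unfold window_sumR, box_sumR, in_window. simpl.
  set (I1 := fun p1 => Defs.ind (fst k - Z.of_nat m <= p1 <= fst k + Z.of_nat m)%Z).
  set (I2 := fun p2 => Defs.ind (snd k - Z.of_nat m <= p2 <= snd k + Z.of_nat m)%Z).
  apply Rle_trans with
    (sumR (centered m) (fun j1 => sumR (centered K2) (fun p2 => I2 p2 * F (fst k + j1, p2)%Z))).
  { apply sumR_le; intros j1 _.
    apply (sumR_centered_shift_le m K2 (snd k) (fun p2 => F (fst k + j1, p2)%Z)); auto. }
  apply Rle_trans with
    (sumR (centered K1) (fun p1 => I1 p1 * sumR (centered K2) (fun p2 => I2 p2 * F (p1, p2)))).
  { apply (sumR_centered_shift_le m K1 (fst k)
      (fun p1 => sumR (centered K2) (fun p2 => I2 p2 * F (p1, p2)))); auto.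
    intros p. apply sumR_ge0; intros. apply Rmult_le_pos; [apply ind_bounds|auto]. }
  apply Req_le, sumR_ext; intros p1 _. rewrite <- sumR_scal. apply sumR_ext; intros p2 _.
  rewrite ind_and. unfold I1, I2. ring.
Qed.

Lemma window_mass_le_box_mass m R1 R2 nu p : 1 <= R1 -> 1 <= R2 -> valid_measure nu ->
  sumR nu (fun b => Defs.ind (in_window m (lattice_pt m R1 R2 (pt b)) p) * mass b) <=
  box_mass nu R1 R2 (IZR (fst p) / (win_len m * R1)) (IZR (snd p) / (win_len m * R2)).
Proof.
  intros HR1 HR2 Vn. rewrite box_mass_sumR. apply sumR_le; intros b Hb.
  destruct (valid_measure_In nu b Vn Hb) as [Mb _].
  apply Rmult_le_compat_r; auto. rewrite <- ind_and. apply ind_mono.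
  intros [C1 C2]. split; apply round_window_in_box; auto.
Qed.

(* Each lattice point lies in the windows of the frequencies of a single box of size
   1/R1 x 1/R2, so it is counted with total nu-mass at most M. *)
Lemma window_sumR_le_box_mass m R1 R2 nu M (F : Z * Z -> R) :
  1 <= R1 -> 1 <= R2 -> valid_measure nu ->
  (forall xi1 xi2, box_mass nu R1 R2 xi1 xi2 <= M) -> (forall p, 0 <= F p) ->
  sumR nu (fun b => mass b * window_sumR m F (lattice_pt m R1 R2 (pt b))) <=
  M * box_sumR (lattice_radius m R1) (lattice_radius m R2) F.
Proof.
  intros HR1 HR2 Vn HM HF. set (K1 := lattice_radius m R1). set (K2 := lattice_radius m R2).
  apply Rle_trans with (sumR nu (fun b => mass b *
    box_sumR K1 K2 (fun p => Defs.ind (in_window m (lattice_pt m R1 R2 (pt b)) p) * F p))).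
  - apply sumR_le; intros b Hb. destruct (valid_measure_In nu b Vn Hb) as [Mb [W1 W2]].
    apply Rmult_le_compat_l; auto.
    destruct (round_window_in_radius m R1 (fst (pt b)) HR1 W1).
    destruct (round_window_in_radius m R2 (snd (pt b)) HR2 W2).
    apply window_sumR_le_box_sumR; auto.
  - unfold box_sumR.
    rewrite (sumR_ext nu _ (fun b => sumR (centered K1) (fun p1 => sumR (centered K2) (fun p2 =>
      mass b * (Defs.ind (in_window m (lattice_pt m R1 R2 (pt b)) (p1, p2)) * F (p1, p2))))))
      by (intros; rewrite <- sumR_scal; apply sumR_ext; intros; rewrite <- sumR_scal; auto).
    rewrite sumR_swap, <- sumR_scal. apply sumR_le; intros p1 _.
    rewrite sumR_swap, <- sumR_scal. apply sumR_le; intros p2 _.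
    rewrite (sumR_ext _ _ (fun b => F (p1, p2) *
      (Defs.ind (in_window m (lattice_pt m R1 R2 (pt b)) (p1, p2)) * mass b))) by (intros; ring).
    rewrite sumR_scal, Rmult_comm. apply Rmult_le_compat_r; auto.
    eapply Rle_trans; [apply (window_mass_le_box_mass m R1 R2 nu (p1, p2)); auto|]. apply HM.
Qed.

(** * The Fejer kernel and the TT* bound *)

Definition long_range (K : nat) : list Z := zrange (- Z.of_nat K) (3 * K + 1).
Definition short_range (K : nat) : list Z := zrange 0 (K + 1).

(* The kernel produced by the shift averaging of [box_sumR_le_shift_average]. *)
Definition fejer (m K : nat) (y : R) : R :=
  Cmod (sumC (long_range K) (phase m y)) * Cmod (sumC (short_range K) (phase m y)) / (INR K + 1).

Lemma sumR_short_range_const K (X : R) : sumR (short_range K) (fun _ => X) = (INR K + 1) * X.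
Proof. rewrite sumR_const. unfold short_range. rewrite zrange_length, plus_INR. simpl. ring. Qed.

Lemma sumR_centered_le_shifted (K : nat) (t : Z) (h : Z -> R) : (forall p, 0 <= h p) ->
  (0 <= t <= Z.of_nat K)%Z -> sumR (centered K) h <= sumR (long_range K) (fun s => h (s - t)%Z).
Proof.
  intros Hh Ht. unfold centered, long_range.
  transitivity (sumR (zrange (t + - Z.of_nat K) (2 * K + 1)) (fun s => h (s - t)%Z)).
  - rewrite <- sumR_zrange_shift. apply Req_le, sumR_ext; intros; f_equal; lia.
  - apply sumR_zrange_le; auto; lia.
Qed.

(* Averaging over the shifts t in [0, K]^2: every shifted box [-K, K]^2 + t lies in the
   long box [-K, 2K]^2. *)
Lemma box_sumR_le_shift_average K1 K2 (h : Z * Z -> R) : (forall p, 0 <= h p) ->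
  (INR K1 + 1) * (INR K2 + 1) * box_sumR K1 K2 h <=
  sumR (short_range K1) (fun t1 => sumR (short_range K2) (fun t2 =>
    sumR (long_range K1) (fun s1 => sumR (long_range K2) (fun s2 =>
      h ((s1 - t1)%Z, (s2 - t2)%Z))))).
Proof.
  intros Hh. rewrite Rmult_assoc, <- sumR_short_range_const. apply sumR_le; intros t1 Ht1.
  rewrite <- sumR_short_range_const. apply sumR_le; intros t2 Ht2.
  unfold short_range in Ht1, Ht2. apply in_zrange in Ht1, Ht2. unfold box_sumR.
  apply Rle_trans with (sumR (centered K1) (fun p1 =>
    sumR (long_range K2) (fun s2 => h (p1, (s2 - t2)%Z)))).
  - apply sumR_le; intros p1 _. apply (sumR_centered_le_shifted K2 t2 (fun p2 => h (p1, p2))); auto.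
    lia.
  - apply (sumR_centered_le_shifted K1 t1
      (fun p1 => sumR (long_range K2) (fun s2 => h (p1, (s2 - t2)%Z)))); [|lia].
    intros; apply sumR_ge0; auto.
Qed.

Lemma phase2_diff_conj m z z' s1 s2 t1 t2 :
  Cmult (phase2 m z ((s1 - t1)%Z, (s2 - t2)%Z)) (Cconj (phase2 m z' ((s1 - t1)%Z, (s2 - t2)%Z))) =
  Cmult (Cmult (Cmult (Cconj (phase m (fst z - fst z') t1)) (Cconj (phase m (snd z - snd z') t2)))
               (phase m (fst z - fst z') s1)) (phase m (snd z - snd z') s2).
Proof.
  unfold phase2, phase. simpl. rewrite !Cmult_conj, !cexpi_conj, !cexpi_add. f_equal.
  rewrite !minus_IZR. unfold Rdiv. ring.
Qed.

Definition shift_pairs (K1 K2 : nat) : list ((Z * Z) * (Z * Z)) :=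
  list_prod (list_prod (short_range K1) (short_range K2))
            (list_prod (long_range K1) (long_range K2)).

Definition shifted_phase2 (m : nat) (z : R * R) (l : (Z * Z) * (Z * Z)) : C :=
  phase2 m z ((fst (snd l) - fst (fst l))%Z, (snd (snd l) - snd (fst l))%Z).

Lemma Cmod_shifted_phase2_correlation m K1 K2 z z' :
  Cmod (sumC (shift_pairs K1 K2)
              (fun l => Cmult (shifted_phase2 m z l) (Cconj (shifted_phase2 m z' l))))
  = (INR K1 + 1) * fejer m K1 (fst z - fst z') * ((INR K2 + 1) * fejer m K2 (snd z - snd z')).
Proof.
  set (y1 := fst z - fst z'). set (y2 := snd z - snd z').
  unfold shift_pairs. rewrite sumC_prod.
  rewrite (sumC_ext _ _ (fun t => sumC (list_prod (long_range K1) (long_range K2)) (fun s =>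
    Cmult (Cmult (Cmult (Cconj (phase m y1 (fst t))) (Cconj (phase m y2 (snd t))))
                 (phase m y1 (fst s))) (phase m y2 (snd s))))).
  2:{ intros [t1 t2] _. apply sumC_ext; intros [s1 s2] _. apply phase2_diff_conj. }
  rewrite sumC_prod, (sumC_ext (short_range K1) _ (fun t1 => sumC (short_range K2) (fun t2 =>
    sumC (long_range K1) (fun s1 => sumC (long_range K2) (fun s2 =>
      Cmult (Cmult (Cmult (Cconj (phase m y1 t1)) (Cconj (phase m y2 t2)))
                   (phase m y1 s1)) (phase m y2 s2)))))).
  2:{ intros t1 _. apply sumC_ext; intros t2 _. simpl. rewrite sumC_prod. auto. }
  rewrite sumC_mult4, <- !sumC_conj, !Cmod_mult, !Cmod_conj. unfold fejer.
  field. split; pose proof (pos_INR K1); pose proof (pos_INR K2); lra.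
Qed.

Lemma lattice_coef_l2_le m K1 K2 (mu : fmeasure) :
  box_sumR K1 K2 (fun p => Cmod (lattice_coef m mu p) ^ 2) <=
  sumR mu (fun a => sumR mu (fun a' => Cmod (weight m a) * Cmod (weight m a') *
     (fejer m K1 (fst (pt a) - fst (pt a')) * fejer m K2 (snd (pt a) - snd (pt a'))))).
Proof.
  assert (HK : 0 < (INR K1 + 1) * (INR K2 + 1))
    by (pose proof (pos_INR K1); pose proof (pos_INR K2); nra).
  apply Rmult_le_reg_l with ((INR K1 + 1) * (INR K2 + 1)); [exact HK|].
  eapply Rle_trans; [apply box_sumR_le_shift_average; intros; apply pow2_ge_0|].
  replace (sumR (short_range K1) _) with (sumR (shift_pairs K1 K2) (fun l =>
    Cmod (sumC mu (fun a => Cmult (weight m a) (shifted_phase2 m (pt a) l))) ^ 2)).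
  2:{ unfold shift_pairs. rewrite !sumR_prod. apply sumR_ext; intros t1 _.
      apply sumR_ext; intros t2 _. rewrite sumR_prod. auto. }
  eapply Rle_trans; [apply sum_Cmod_sqr_le_correlations|].
  rewrite <- sumR_scal. apply Req_le, sumR_ext; intros a _.
  rewrite <- sumR_scal. apply sumR_ext; intros a' _.
  rewrite Cmod_shifted_phase2_correlation. ring.
Qed.

Lemma fejer_ge0 m K y : 0 <= fejer m K y.
Proof.
  unfold fejer. pose proof (pos_INR K).
  apply Rmult_le_pos; [apply Rmult_le_pos; apply Cmod_ge_0|apply Rlt_le, Rinv_0_lt_compat; lra].
Qed.

Lemma Cmod_sumC_phase_le m y l : Cmod (sumC l (phase m y)) <= INR (length l).
Proof.
  eapply Rle_trans; [apply Cmod_sumC|].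
  erewrite sumR_ext by (intros; apply Cmod_cexpi). rewrite sumR_const. lra.
Qed.

Lemma fejer_le_trivial m K y : fejer m K y <= 3 * INR K + 1.
Proof.
  unfold fejer. pose proof (pos_INR K).
  pose proof (Cmod_sumC_phase_le m y (long_range K)) as Ha.
  pose proof (Cmod_sumC_phase_le m y (short_range K)) as Hb.
  unfold long_range, short_range in *. rewrite zrange_length in Ha, Hb.
  rewrite plus_INR, mult_INR in Ha. rewrite plus_INR in Hb.
  replace (INR 3) with 3 in Ha by (simpl; lra). replace (INR 1) with 1 in Ha, Hb by auto.
  set (a := Cmod _) in Ha |- *. set (b := Cmod _) in Hb |- *.
  assert (0 <= a) by apply Cmod_ge_0. assert (0 <= b) by apply Cmod_ge_0.
  unfold Rdiv. apply Rmult_le_reg_r with (INR K + 1); [lra|].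
  rewrite Rmult_assoc, Rinv_l, Rmult_1_r by lra. apply Rmult_le_compat; lra.
Qed.

Lemma sin_sqr_half_phase_ge m y : Rabs y <= 2 ->
  y ^ 2 / (6 * win_len m ^ 2) <= sin (y / win_len m / 2) ^ 2.
Proof.
  intros Hy. pose proof (win_len_ge1 m). set (n := win_len m) in *.
  assert (Rabs (y / n / 2) <= 1).
  { unfold Rdiv. rewrite !Rabs_mult, !Rabs_inv, (Rabs_right n), (Rabs_right 2) by lra.
    apply Rle_trans with (2 * / n * / 2).
    - apply Rmult_le_compat_r; [lra|].
      apply Rmult_le_compat_r; [apply Rlt_le, Rinv_0_lt_compat|]; lra.
    - replace (2 * / n * / 2) with (/ n) by (field; lra).
      rewrite <- Rinv_1. apply Rinv_le_contravar; lra. }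
  eapply Rle_trans; [|apply sin_sqr_ge; auto].
  replace ((y / n / 2) ^ 2) with (y ^ 2 / n ^ 2 / 4) by (field; lra).
  assert (0 <= y ^ 2 / n ^ 2)
    by (apply Rmult_le_pos; [apply pow2_ge_0|apply Rlt_le, Rinv_0_lt_compat; nra]).
  replace (y ^ 2 / (6 * n ^ 2)) with (y ^ 2 / n ^ 2 / 6) by (field; lra). lra.
Qed.

(* Both Dirichlet sums are O(1 / |sin|) at frequency y / (2m+1). *)
Lemma fejer_mul_sqr_le m K y : Rabs y <= 2 ->
  fejer m K y * y ^ 2 <= 6 * win_len m ^ 2 / (INR K + 1).
Proof.
  intros Hy. pose proof (win_len_ge1 m). pose proof (pos_INR K).
  set (a := Cmod (sumC (long_range K) (phase m y))).
  set (b := Cmod (sumC (short_range K) (phase m y))).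
  set (s2 := sin (y / win_len m / 2) ^ 2).
  assert (Da : s2 * a ^ 2 <= 1) by apply dirichlet_sin_bound.
  assert (Db : s2 * b ^ 2 <= 1) by apply dirichlet_sin_bound.
  assert (0 <= a) by apply Cmod_ge_0. assert (0 <= b) by apply Cmod_ge_0.
  assert (0 <= s2) by apply pow2_ge_0.
  assert (Dab : s2 * (a * b) <= 1).
  { assert ((s2 * (a * b)) ^ 2 <= 1).
    { replace ((s2 * (a * b)) ^ 2) with ((s2 * a ^ 2) * (s2 * b ^ 2)) by ring.
      apply Rle_trans with (1 * 1); [apply Rmult_le_compat; nra|lra]. }
    assert (0 <= s2 * (a * b)) by (apply Rmult_le_pos; nra). nra. }
  assert (Hs := sin_sqr_half_phase_ge m y Hy). fold s2 in Hs.
  assert (Hab : a * b * y ^ 2 <= 6 * win_len m ^ 2).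
  { assert (0 < win_len m ^ 2) by nra.
    apply Rmult_le_reg_r with (/ (6 * win_len m ^ 2)); [apply Rinv_0_lt_compat; lra|].
    replace (6 * win_len m ^ 2 * / (6 * win_len m ^ 2)) with 1 by (field; lra).
    apply Rle_trans with (a * b * s2); [|nra].
    rewrite Rmult_assoc. apply Rmult_le_compat_l; [nra|exact Hs]. }
  unfold fejer. fold a b. unfold Rdiv.
  replace (a * b * / (INR K + 1) * y ^ 2) with (a * b * y ^ 2 * / (INR K + 1)) by ring.
  apply Rmult_le_compat_r; [apply Rlt_le, Rinv_0_lt_compat; lra|exact Hab].
Qed.

Lemma fejer_bounds m R y : 1 <= R -> Rabs y <= 2 ->
  fejer m (lattice_radius m R) y <= 10 * win_len m * R /\
  fejer m (lattice_radius m R) y * (R * y) ^ 2 <= 10 * win_len m * R.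
Proof.
  intros HR Hy. pose proof (lattice_radius_spec m R HR) as HK. pose proof (win_len_ge1 m).
  set (K := lattice_radius m R) in *. split.
  - eapply Rle_trans; [apply fejer_le_trivial|]. nra.
  - replace (fejer m K y * (R * y) ^ 2) with (fejer m K y * y ^ 2 * R ^ 2) by ring.
    eapply Rle_trans; [apply Rmult_le_compat_r; [apply pow2_ge_0|apply fejer_mul_sqr_le; auto]|].
    assert (win_len m * R < INR K + 1) by nra.
    apply Rle_trans with (6 * win_len m ^ 2 / (win_len m * R) * R ^ 2).
    + apply Rmult_le_compat_r; [apply pow2_ge_0|]. unfold Rdiv.
      apply Rmult_le_compat_l; [nra|]. apply Rinv_le_contravar; nra.
    + replace (6 * win_len m ^ 2 / (win_len m * R) * R ^ 2) with (6 * win_len m * R)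
        by (field; lra).
      nra.
Qed.

(** * Schur test and conclusion *)

Lemma box_sumR_decay_box_mass_le mu R1 R2 M x1 x2 U1 U2 :
  (forall xi1 xi2, box_mass mu R1 R2 xi1 xi2 <= M) -> 0 <= M ->
  box_sumR U1 U2 (fun a => decay (fst a) * decay (snd a) *
    box_mass mu R1 R2 (x1 + 2 * IZR (fst a) / R1) (x2 + 2 * IZR (snd a) / R2)) <= 100 * M.
Proof.
  intros HM HM0. unfold box_sumR. simpl.
  apply Rle_trans with (sumR (centered U1) decay * sumR (centered U2) decay * M).
  - rewrite sumR_mult, <- sumR_scal_r. apply sumR_le; intros a1 _.
    rewrite <- sumR_scal_r. apply sumR_le; intros a2 _.
    pose proof (decay_pos a1). pose proof (decay_pos a2).
    apply Rmult_le_compat_l; [nra|apply HM].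
  - pose proof (sum_decay_le U1). pose proof (sum_decay_le U2).
    assert (0 <= sumR (centered U1) decay) by (apply sumR_ge0; intros; apply Rlt_le, decay_pos).
    assert (0 <= sumR (centered U2) decay) by (apply sumR_ge0; intros; apply Rlt_le, decay_pos).
    apply Rmult_le_compat_r; [auto|]. apply Rle_trans with (10 * 10); [apply Rmult_le_compat|]; lra.
Qed.

Lemma fejer_product_le_box_cover m R1 R2 (z w : R * R) : 1 <= R1 -> 1 <= R2 ->
  Rabs (fst z - fst w) <= 2 -> Rabs (snd z - snd w) <= 2 ->
  fejer m (lattice_radius m R1) (fst z - fst w) * fejer m (lattice_radius m R2) (snd z - snd w) <=
  10 * win_len m * R1 * (10 * win_len m * R2) *
  box_sumR (Z.to_nat (up R1)) (Z.to_nat (up R2)) (fun a => decay (fst a) * decay (snd a) *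
    (Defs.ind (Bint (fst z + 2 * IZR (fst a) / R1) (/ R1) (fst w)) *
     Defs.ind (Bint (snd z + 2 * IZR (snd a) / R2) (/ R2) (snd w)))).
Proof.
  intros HR1 HR2 D1 D2.
  destruct (fejer_bounds m R1 _ HR1 D1) as [F1 F1'].
  destruct (fejer_bounds m R2 _ HR2 D2) as [F2 F2'].
  pose proof (le_decay_box_cover R1 _ _ _ _ HR1 (fejer_ge0 _ _ _) F1 F1' D1) as C1.
  pose proof (le_decay_box_cover R2 _ _ _ _ HR2 (fejer_ge0 _ _ _) F2 F2' D2) as C2.
  eapply Rle_trans; [apply Rmult_le_compat; [apply fejer_ge0|apply fejer_ge0|exact C1|exact C2]|].
  apply Req_le. unfold box_sumR.
  replace (_ * _) with (10 * win_len m * R1 * (10 * win_len m * R2) *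
    (sumR (centered (Z.to_nat (up R1)))
    (fun a => Defs.ind (Bint (fst z + 2 * IZR a / R1) (/ R1) (fst w)) * decay a) *
    sumR (centered (Z.to_nat (up R2)))
    (fun a => Defs.ind (Bint (snd z + 2 * IZR a / R2) (/ R2) (snd w)) * decay a))) by ring.
  f_equal. rewrite sumR_mult. apply sumR_ext; intros a1 _. apply sumR_ext; intros a2 _. simpl. ring.
Qed.

(* Schur test for the Fejer kernel: by the box covering, the mu-mass it sees around any point
   of [-1,1]^2 is O(n^2 R1 R2 M). *)
Lemma fejer_schur_bound m R1 R2 (mu : fmeasure) M (z : R * R) :
  1 <= R1 -> 1 <= R2 -> valid_measure mu ->
  (forall xi1 xi2, box_mass mu R1 R2 xi1 xi2 <= M) -> Rabs (fst z) <= 1 -> Rabs (snd z) <= 1 ->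
  sumR mu (fun a => mass a * (fejer m (lattice_radius m R1) (fst z - fst (pt a)) *
                              fejer m (lattice_radius m R2) (snd z - snd (pt a))))
    <= 10000 * win_len m ^ 2 * R1 * R2 * M.
Proof.
  intros HR1 HR2 Vm HM Hz1 Hz2.
  assert (HM0 : 0 <= M) by (eapply Rle_trans; [apply (box_mass_ge0 mu R1 R2 0 0 Vm)|apply HM]).
  pose proof (win_len_ge1 m). set (B := 10 * win_len m * R1 * (10 * win_len m * R2)).
  assert (HB : 0 <= B).
  { unfold B. assert (0 <= win_len m * R1) by nra. assert (0 <= win_len m * R2) by nra. nra. }
  set (U1 := Z.to_nat (up R1)). set (U2 := Z.to_nat (up R2)).
  set (I := fun (a : (R * R) * R) (c : Z * Z) =>
    Defs.ind (Bint (fst z + 2 * IZR (fst c) / R1) (/ R1) (fst (pt a))) *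
    Defs.ind (Bint (snd z + 2 * IZR (snd c) / R2) (/ R2) (snd (pt a)))).
  apply Rle_trans with (sumR mu (fun a => mass a * (B * box_sumR U1 U2 (fun c =>
    decay (fst c) * decay (snd c) * I a c)))).
  { apply sumR_le; intros a Ha. destruct (valid_measure_In mu a Vm Ha) as [Ma [W1 W2]].
    apply Rmult_le_compat_l; auto. apply fejer_product_le_box_cover; auto.
    - eapply Rle_trans; [apply Rabs_triang|]. rewrite Rabs_Ropp. lra.
    - eapply Rle_trans; [apply Rabs_triang|]. rewrite Rabs_Ropp. lra. }
  replace (10000 * win_len m ^ 2 * R1 * R2 * M) with (B * (100 * M)) by (unfold B; ring).
  rewrite (sumR_ext _ _ (fun a => B * (mass a * box_sumR U1 U2 (fun c =>
    decay (fst c) * decay (snd c) * I a c)))) by (intros; ring).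
  rewrite sumR_scal. apply Rmult_le_compat_l; auto.
  eapply Rle_trans; [|apply (box_sumR_decay_box_mass_le mu R1 R2 M (fst z) (snd z) U1 U2 HM HM0)].
  apply Req_le. unfold box_sumR.
  rewrite (sumR_ext mu _ (fun a => sumR (centered U1) (fun c1 => sumR (centered U2) (fun c2 =>
    decay c1 * decay c2 * (I a (c1, c2) * mass a)))))
    by (intros; rewrite <- sumR_scal; apply sumR_ext; intros; rewrite <- sumR_scal;
        apply sumR_ext; intros; simpl; ring).
  rewrite sumR_swap. apply sumR_ext; intros c1 _. rewrite sumR_swap. apply sumR_ext; intros c2 _.
  rewrite sumR_scal, box_mass_sumR. auto.
Qed.

Lemma Cmod_weight_le m a : 0 <= mass a -> Rabs (fst (pt a)) <= 1 -> Rabs (snd (pt a)) <= 1 ->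
  Cmod (weight m a) <= 2 * mass a / win_len m ^ 2.
Proof.
  intros Ma H1 H2. unfold weight.
  pose proof (win_kernel_neq0 m _ H1). pose proof (win_kernel_neq0 m _ H2).
  rewrite Cmod_div by (apply Cmult_neq_0; auto). rewrite Cmod_mult, Cmod_R, Rabs_right by lra.
  pose proof (win_kernel_lower m _ H1). pose proof (win_kernel_lower m _ H2).
  pose proof (win_len_ge1 m).
  set (u := Cmod (win_kernel m (fst (pt a)))) in *.
  set (v := Cmod (win_kernel m (snd (pt a)))) in *.
  assert (win_len m ^ 2 / 2 <= u * v).
  { apply Rle_trans with ((7/8 * win_len m) * (7/8 * win_len m)); [nra|].
    apply Rmult_le_compat; nra. }
  unfold Rdiv. apply Rmult_le_reg_r with (u * v * win_len m ^ 2); [apply Rmult_lt_0_compat; nra|].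
  replace (mass a * / (u * v) * (u * v * win_len m ^ 2)) with (mass a * win_len m ^ 2)
    by (field; nra).
  replace (2 * mass a * / win_len m ^ 2 * (u * v * win_len m ^ 2)) with (2 * mass a * (u * v))
    by (field; nra).
  nra.
Qed.

Lemma lattice_coef_l2_bound m R1 R2 mu M : 1 <= R1 -> 1 <= R2 -> valid_measure mu ->
  (forall xi1 xi2, box_mass mu R1 R2 xi1 xi2 <= M) ->
  box_sumR (lattice_radius m R1) (lattice_radius m R2) (fun p => Cmod (lattice_coef m mu p) ^ 2)
    <= 40000 * R1 * R2 * M * total_mass mu / win_len m ^ 2.
Proof.
  intros HR1 HR2 Vm HM. pose proof (win_len_ge1 m). set (n := win_len m) in *.
  assert (Hn : 0 < / n ^ 2) by (apply Rinv_0_lt_compat; nra).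
  set (F := fun a a' => fejer m (lattice_radius m R1) (fst (pt a) - fst (pt a')) *
                        fejer m (lattice_radius m R2) (snd (pt a) - snd (pt a'))).
  eapply Rle_trans; [apply lattice_coef_l2_le|].
  apply Rle_trans with (sumR mu (fun a => 2 * mass a / n ^ 2 *
    (2 / n ^ 2 * sumR mu (fun a' => mass a' * F a a')))).
  { apply sumR_le; intros a Ha. destruct (valid_measure_In mu a Vm Ha) as [Ma [A1 A2]].
    rewrite <- !sumR_scal. apply sumR_le; intros a' Ha'.
    destruct (valid_measure_In mu a' Vm Ha') as [Ma' [A1' A2']].
    assert (0 <= F a a') by (apply Rmult_le_pos; apply fejer_ge0).
    pose proof (Cmod_weight_le m a Ma A1 A2) as Hw.
    pose proof (Cmod_weight_le m a' Ma' A1' A2') as Hw'.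
    fold n in Hw, Hw'. change (fejer _ _ _ * fejer _ _ _) with (F a a').
    replace (2 * mass a / n ^ 2 * (2 / n ^ 2 * (mass a' * F a a')))
      with (2 * mass a / n ^ 2 * (2 * mass a' / n ^ 2) * F a a') by (unfold Rdiv; ring).
    apply Rmult_le_compat_r; auto. apply Rmult_le_compat; auto using Cmod_ge_0. }
  apply Rle_trans with (sumR mu (fun a => 2 * mass a / n ^ 2 *
    (2 / n ^ 2 * (10000 * n ^ 2 * R1 * R2 * M)))).
  { apply sumR_le; intros a Ha. destruct (valid_measure_In mu a Vm Ha) as [Ma [A1 A2]].
    apply Rmult_le_compat_l; [unfold Rdiv; nra|]. apply Rmult_le_compat_l; [unfold Rdiv; lra|].
    apply (fejer_schur_bound m R1 R2 mu M (pt a)); auto. }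
  rewrite (sumR_ext _ _ (fun a =>
    mass a * (2 / n ^ 2 * (2 / n ^ 2 * (10000 * n ^ 2 * R1 * R2 * M)))))
    by (intros; unfold Rdiv; ring).
  rewrite sumR_scal_r, <- total_mass_sumR. apply Req_le. field. lra.
Qed.

Lemma discrete_osc_sum_bound m R1 R2 mu nu Mmu Mnu : 1 <= R1 -> 1 <= R2 ->
  valid_measure mu -> valid_measure nu ->
  (forall xi1 xi2, box_mass mu R1 R2 xi1 xi2 <= Mmu) ->
  (forall xi1 xi2, box_mass nu R1 R2 xi1 xi2 <= Mnu) ->
  Cmod (discrete_osc_sum m R1 R2 mu nu)
    <= 200 * sqrt (R1 * R2 * total_mass mu * total_mass nu * Mmu * Mnu).
Proof.
  intros HR1 HR2 Vm Vn HMm HMn. pose proof (win_len_ge1 m).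
  assert (HMm0 : 0 <= Mmu) by (eapply Rle_trans; [apply (box_mass_ge0 mu R1 R2 0 0 Vm)|apply HMm]).
  assert (HMn0 : 0 <= Mnu) by (eapply Rle_trans; [apply (box_mass_ge0 nu R1 R2 0 0 Vn)|apply HMn]).
  pose proof (total_mass_ge0 mu Vm). pose proof (total_mass_ge0 nu Vn).
  assert (Hsq : Cmod (discrete_osc_sum m R1 R2 mu nu) ^ 2 <=
                200 ^ 2 * (R1 * R2 * total_mass mu * total_mass nu * Mmu * Mnu)).
  { eapply Rle_trans; [apply discrete_osc_sum_sqr_le; auto|].
    assert (0 <= total_mass nu * win_len m ^ 2) by (apply Rmult_le_pos; [auto|apply pow2_ge_0]).
    eapply Rle_trans.
    { apply Rmult_le_compat_l; auto. eapply Rle_trans.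
      - apply (window_sumR_le_box_mass m R1 R2 nu Mnu); auto. intros; apply pow2_ge_0.
      - apply Rmult_le_compat_l; auto. apply (lattice_coef_l2_bound m R1 R2 mu Mmu); auto. }
    apply Req_le. field. lra. }
  rewrite <- (sqrt_pow2 (Cmod _)) by apply Cmod_ge_0.
  rewrite <- (sqrt_pow2 200) by lra. rewrite <- sqrt_mult_alt by nra.
  apply sqrt_le_1_alt. exact Hsq.
Qed.

Lemma osc_sum_le_discretized m R1 R2 mu nu Mmu Mnu : 1 <= R1 -> 1 <= R2 ->
  valid_measure mu -> valid_measure nu ->
  (forall xi1 xi2, box_mass mu R1 R2 xi1 xi2 <= Mmu) ->
  (forall xi1 xi2, box_mass nu R1 R2 xi1 xi2 <= Mnu) ->
  Cmod (osc_sum R1 R2 mu nu) <= 200 * sqrt (R1 * R2 * total_mass mu * total_mass nu * Mmu * Mnu)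
    + total_mass mu * total_mass nu / win_len m.
Proof.
  intros. pose proof (discrete_osc_sum_bound m R1 R2 mu nu Mmu Mnu) as HS.
  pose proof (discretization_error m R1 R2 mu nu) as HE.
  replace (osc_sum R1 R2 mu nu) with (Cplus (discrete_osc_sum m R1 R2 mu nu)
    (Cminus (osc_sum R1 R2 mu nu) (discrete_osc_sum m R1 R2 mu nu))) by ring.
  eapply Rle_trans; [apply Cmod_triangle|]. apply Rplus_le_compat; auto.
Qed.

Lemma le_of_forall_le_add_div_win_len (x y c : R) : (forall m, x <= y + c / win_len m) -> x <= y.
Proof.
  intros H. destruct (Rle_lt_dec x y) as [|Hxy]; auto. exfalso.
  destruct (archimed (Rabs c / (x - y))) as [U _].
  assert (Hup : (0 <= up (Rabs c / (x - y)))%Z).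
  { apply le_IZR. apply Rlt_le, Rle_lt_trans with (2 := U).
    apply Rmult_le_pos; [apply Rabs_pos|apply Rlt_le, Rinv_0_lt_compat; lra]. }
  set (m := Z.to_nat (up (Rabs c / (x - y)))).
  assert (HmZ : INR m = IZR (up (Rabs c / (x - y))))
    by (unfold m; rewrite INR_IZR_INZ, Z2Nat.id; auto).
  assert (Hm : Rabs c / (x - y) < win_len m) by (unfold win_len; pose proof (pos_INR m); lra).
  specialize (H m). pose proof (win_len_ge1 m).
  assert (c / win_len m < x - y).
  { apply Rle_lt_trans with (Rabs c / win_len m).
    - unfold Rdiv. apply Rmult_le_compat_r; [apply Rlt_le, Rinv_0_lt_compat; lra|apply Rle_abs].
    - apply Rmult_lt_reg_r with (win_len m); [lra|].
      unfold Rdiv. rewrite Rmult_assoc, Rinv_l, Rmult_1_r by lra.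
      apply Rmult_lt_reg_r with (/ (x - y)); [apply Rinv_0_lt_compat; lra|].
      replace ((x - y) * win_len m * / (x - y)) with (win_len m) by (field; lra). exact Hm. }
  lra.
Qed.

Lemma sqrt_mult6 a b c d e f : 0 <= a -> 0 <= b -> 0 <= c -> 0 <= d -> 0 <= e -> 0 <= f ->
  sqrt (a * b * c * d * e * f) = sqrt (a * b) * sqrt c * sqrt d * sqrt e * sqrt f.
Proof. intros. rewrite !sqrt_mult_alt; repeat apply Rmult_le_pos; auto. Qed.

Theorem lemma6p1 :
  exists C0 : R, forall (R1 R2 : R) (mu nu : fmeasure) (Mmu Mnu : R),
    1 <= R1 -> 1 <= R2 ->
    valid_measure mu -> valid_measure nu ->
    is_M mu R1 R2 Mmu -> is_M nu R1 R2 Mnu ->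
    Cmod (osc_sum R1 R2 mu nu) <=
      C0 * sqrt (R1 * R2) * sqrt (total_mass mu) * sqrt (total_mass nu)
         * sqrt Mmu * sqrt Mnu.
Proof.
  exists 200. intros R1 R2 mu nu Mmu Mnu HR1 HR2 Vm Vn [HMm _] [HMn _].
  assert (0 <= Mmu) by (eapply Rle_trans; [apply (box_mass_ge0 mu R1 R2 0 0 Vm)|apply HMm]).
  assert (0 <= Mnu) by (eapply Rle_trans; [apply (box_mass_ge0 nu R1 R2 0 0 Vn)|apply HMn]).
  pose proof (total_mass_ge0 mu Vm). pose proof (total_mass_ge0 nu Vn).
  replace (200 * sqrt (R1 * R2) * _ * _ * _ * _)
    with (200 * sqrt (R1 * R2 * total_mass mu * total_mass nu * Mmu * Mnu))
    by (rewrite sqrt_mult6 by (auto; lra); ring).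
  apply (le_of_forall_le_add_div_win_len _ _ (total_mass mu * total_mass nu)). intros m.
  apply osc_sum_le_discretized; auto.
Qed.
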